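(* Let $y$ solve $\dot y = f(y,t)$, $t\in(0,T]$, $y(0)=y_0$, with $f:\mathbb{R}^m\times\mathbb{R}\to\mathbb{R}^m$ Lipschitz and continuously differentiable in $t$, and let $Y(t)$ be an approximate solution with error $\epsilon(t)=y(t)-Y(t)$. Let $S(y(t))=v\cdot y(t)$ for some $v\in\mathbb{R}^m$ (so $\nabla_yS=v$), let $R$ be a threshold value, $t_t=\min_{t\in(0,T]}\arg(S(y(t))=R)$, $t_c=\min_{t\in(0,T]}\arg(S(Y(t))=R)$, and $e_Q=t_t-t_c$. Then $$e_Q=\frac{-v\cdot(y(t_c)-Y(t_c))-\mathcal{R}_1(t_c,t_t)}{v\cdot f(Y(t_c),t_c)+v^\top\nabla_yf(Y(t_c),t_c)\cdot(y(t_c)-Y(t_c))+\mathcal{R}_2(Y(t_c))}=\frac{-v\cdot\epsilon(t_c)-\mathcal{R}_1(t_c,t_t)}{v\cdot f(Y(t_c),t_c)+v^\top\nabla_yf(Y(t_c),t_c)\cdot\epsilon(t_c)+\mathcal{R}_2(Y(t_c))},$$ where $\mathcal{R}_1(t_t,t_c)=\tfrac12\frac{d^2S}{dt^2}(y(\xi))(t_t-t_c)^2$ for some $\xi$ between $t_t$ and $t_c$, and $\mathcal{R}_2(Y(t_c))=\|y(t_c)-Y(t_c)\|\,\mathcal{H}_2(Y(t_c))$ for some $\mathcal{H}_2$ with $\lim_{Y(t_c)\to y(t_c)}\mathcal{H}_2(Y(t_c))=0$.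
   Context: $\nabla_y f$ is the Jacobian of $f$ with respect to $y$; $\|\cdot\|$ is the Euclidean norm on $\mathbb{R}^m$. It is assumed the threshold is reached so that $t_t$ and $t_c$ exist. *)

From HB Require Import structures.
From mathcomp Require Import all_boot all_order all_algebra.
From mathcomp Require Import all_classical all_reals all_analysis.
Set Implicit Arguments. Unset Strict Implicit. Unset Printing Implicit Defensive.
Import Order.TTheory GRing.Theory Num.Theory.
Import numFieldNormedType.Exports.
Local Open Scope ring_scope.

Definition dotv (R : realType) (m : nat) (u w : 'rV[R]_m) : R :=
  \sum_(i < m) u ord0 i * w ord0 i.

(* Euclidean norm on R^m (the library's norm on 'rV is the max norm) *)
Definition enorm (R : realType) (m : nat) (u : 'rV[R]_m) : R :=
  Num.sqrt (dotv u u).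

From HB Require Import structures.
From mathcomp Require Import all_boot all_order all_algebra.
From mathcomp Require Import all_classical all_reals all_analysis.
From mathcomp Require Import ring lra.
Set Implicit Arguments. Unset Strict Implicit. Unset Printing Implicit Defensive.
Import Order.TTheory GRing.Theory Num.Theory.
Import numFieldNormedType.Exports.
Local Open Scope classical_set_scope.
Local Open Scope ring_scope.

(* Let S(t) = v . y(t), so that S' = v . f(y, t).  The Taylor-Lagrange formula
   of order two at t_c gives S(t_t) = S(t_c) + (t_t - t_c) v . f(y(t_c), t_c) + R_1,
   and S(t_t) = R = v . Y(t_c) turns this into
   e_Q v . f(y(t_c), t_c) = - v . eps(t_c) - R_1.
   The denominator is v . f(y(t_c), t_c) rewritten as the first-order expansion
   of v . f(., t_c) around Y(t_c); its remainder is o(|y(t_c) - Y(t_c)|) by the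
   mean value theorem along segments and the continuity of the partial
   derivatives. *)

Lemma ler_dist_center (R : realDomainType) (a b c e : R) :
  `|c - a| < e -> `|c - b| < e -> `|a - b| <= 2 * e.
Proof.
move=> ca cb; apply: le_trans (ler_distD c a b) _.
rewrite distrC; lra.
Qed.

Section Calculus.
Variable R : realType.

Lemma is_derive_comp_diff (U W : normedModType R)
    (h : U -> W) (g : R -> U) (t : R) (dg : U) :
  is_derive t 1 g dg -> differentiable h (g t) ->
  is_derive t 1 (h \o g) ('d h (g t) dg).
Proof.
move=> [/derivable1_diffP gD <-] hD.
have hgD : differentiable (h \o g) t by exact: differentiable_comp.
apply: DeriveDef; first exact: diff_derivable.
by rewrite !deriveE // diff_comp.
Qed.

Lemma MVT_diff (U : normedModType R) (h : U -> R) (z d : U) :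
  (forall p, differentiable h p) ->
  exists2 c, c \in `]0, 1[ & h (z + d) - h z = 'd h (z + c *: d) d.
Proof.
move=> hD; pose phi s := h (z + s *: d).
have dphi (s : R) : is_derive s 1 phi ('d h (z + s *: d) d).
  have line : is_derive s 1 (cst z + ( *:%R^~ d) : R -> U) d.
    have lineD : differentiable (cst z + ( *:%R^~ d) : R -> U) s by [].
    apply: DeriveDef; first exact: diff_derivable.
    by rewrite deriveE // diff_val /= add0r scale1r.
  exact: (is_derive_comp_diff line (hD _)).
have phi_cont : {within `[0, 1], continuous phi}.
  by apply: derivable_within_continuous => s _; case: (dphi s).
have [c c01 mvt] := MVT ltr01 (fun s _ => dphi s) phi_cont.
by exists c => //; move: mvt; rewrite /phi scale1r scale0r addr0 subr0 mulr1.
Qed.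

End Calculus.

Section EuclideanRow.
Variables (R : realType) (m : nat).
Implicit Types (v u d : 'rV[R]_m).

Section DotLinear.
Variable v : 'rV[R]_m.

Lemma dotv_is_linear : linear (dotv v).
Proof.
move=> k a b; rewrite /dotv scaler_sumr -big_split /=.
by apply: eq_bigr => i _; rewrite !mxE mulrDr [k *: _]mulrCA.
Qed.

HB.instance Definition _ :=
  GRing.isLinear.Build R 'rV[R]_m R _ (dotv v) dotv_is_linear.

Lemma dotvB a b : dotv v (a - b) = dotv v a - dotv v b.
Proof. exact: linearB. Qed.

End DotLinear.

Lemma dotv_differentiable v u : differentiable (dotv v) u.
Proof.
have -> : dotv v = \sum_(i < m) (v ord0 i *: (fun w : 'rV[R]_m => w ord0 i)).
  by rewrite fct_sumE; apply/funext => w.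
by apply: differentiable_sum => i; apply/differentiableZ/differentiable_coord.
Qed.

Lemma dotv_continuous v : continuous (dotv v).
Proof. by move=> u; apply/differentiable_continuous/dotv_differentiable. Qed.

Lemma diff_dotv v u w : 'd (dotv v) u w = dotv v w.
Proof. by rewrite diff_lin //; apply: dotv_continuous. Qed.

Lemma is_derive_dotv v (g : R -> 'rV[R]_m) (t : R) (dg : 'rV[R]_m) :
  is_derive t 1 g dg -> is_derive t 1 (dotv v \o g) (dotv v dg).
Proof.
move=> gd; have := is_derive_comp_diff gd (dotv_differentiable v (g t)).
by rewrite diff_dotv.
Qed.

Lemma linear_row_sum_delta (L : {linear 'rV[R]_m -> R}) d :
  L d = \sum_(i < m) d ord0 i * L (delta_mx ord0 i).
Proof.
rewrite {1}(row_sum_delta d) linear_sum.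
by apply: eq_bigr => i _; rewrite linearZ.
Qed.

Lemma coord_le_enorm d i : `|d ord0 i| <= enorm d.
Proof.
have sq_ge0 j : 0 <= d ord0 j * d ord0 j by rewrite -expr2 sqr_ge0.
rewrite /enorm /dotv -sqrtr_sqr ler_sqrt; last exact: sumr_ge0.
by rewrite (bigD1 i) //= expr2 lerDl; apply: sumr_ge0.
Qed.

Lemma enorm_ge0 d : 0 <= enorm d.
Proof. exact: sqrtr_ge0. Qed.

Lemma enorm_eq0 d : (enorm d == 0) = (d == 0).
Proof.
apply/eqP/eqP => [d0|->]; last by rewrite /enorm linear0 sqrtr0.
apply/rowP => i; rewrite mxE; apply/normr0_eq0/eqP.
by rewrite eq_le normr_ge0 andbT -d0 coord_le_enorm.
Qed.

Lemma norm_sum_coord_mul_le d (a : 'I_m -> R) :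
  `|\sum_(i < m) d ord0 i * a i| <= enorm d * \sum_(i < m) `|a i|.
Proof.
rewrite mulr_sumr; apply: (le_trans (ler_norm_sum _ _ _)).
by apply: ler_sum => i _; rewrite normrM ler_wpM2r ?coord_le_enorm.
Qed.

End EuclideanRow.

Section ContinuouslyDifferentiable.
Variables (R : realType) (m : nat) (g : 'rV[R]_m -> R).
Hypothesis gD : forall x, differentiable g x.
Hypothesis dg_cont : forall u, continuous (fun x => 'd g x u).

Lemma taylor1_remainder_cvg x :
  (g x - g z - 'd g z (x - z)) / enorm (x - z) @[z --> x] --> 0.
Proof.
apply/(cvgr0Pnorm_le (FF := nbhs_filter x)) => eps eps_gt0.
pose e := eps / (2 * (m%:R + 1)).
have m1_gt0 : 0 < m%:R + 1 :> R by rewrite ltr_wpDl.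
have e_gt0 : 0 < e by rewrite divr_gt0 // mulr_gt0.
have sum_le : \sum_(i < m) 2 * e <= eps.
  rewrite sumr_const card_ord -[_ *+ m]mulr_natl.
  have -> : eps = (m%:R + 1) * (2 * e) by rewrite /e; field; rewrite gt_eqF.
  by rewrite ler_pM2r ?mulr_gt0 // lerDl.
have near_x : \forall p \near x, forall i : 'I_m,
    `|'d g x (delta_mx ord0 i) - 'd g p (delta_mx ord0 i)| < e.
  apply: (filter_forall (nbhs_filter x)) => i.
  by have /(cvgrPdist_lt (FF := nbhs_filter x))/(_ e e_gt0) :=
    @dg_cont (delta_mx ord0 i) x.
case/nbhs_ballP: near_x => del del_gt0 dg_near.
apply/nbhs_ballP; exists del => // z xz /=.
set d := x - z.
have [->|d_neq0] := eqVneq (enorm d) 0; first by rewrite invr0 mulr0 normr0 ltW.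
have [c c01 mvt] := MVT_diff z d gD.
have p_near : ball x del (z + c *: d).
  move: xz; rewrite -!ball_normE /ball_ /=.
  have -> : x - (z + c *: d) = (1 - c) *: d by rewrite opprD addrA -/d scalerBl scale1r.
  rewrite normrZ; apply: le_lt_trans; rewrite ler_piMl // ger0_norm;
    by move: c01; rewrite in_itv /=; lra.
have remE : g x - g z - 'd g z d =
    \sum_(i < m) d ord0 i * ('d g (z + c *: d) (delta_mx ord0 i) - 'd g z (delta_mx ord0 i)).
  have zdE : z + d = x by rewrite addrC subrK.
  rewrite -{1}zdE mvt; under eq_bigr do rewrite mulrBr.
  rewrite sumrB.
  by congr (_ - _); apply: linear_row_sum_delta.
rewrite remE normrM normfV (ger0_norm (enorm_ge0 _)) ler_pdivrMr; last first.
  by rewrite lt_def d_neq0 enorm_ge0.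
apply: le_trans (norm_sum_coord_mul_le _ _) _.
rewrite mulrC; apply: ler_wpM2r; first exact: enorm_ge0.
apply: le_trans sum_le; apply: ler_sum => i _.
exact: ler_dist_center (dg_near _ p_near i) (dg_near _ xz i).
Qed.

End ContinuouslyDifferentiable.

Section TaylorLagrange.
Variables (R : realType) (S G : R -> R) (a b : R).
Hypothesis SD : forall t, t \in `[Num.min a b, Num.max a b] -> is_derive t 1 S (G t).
Hypothesis GD : forall t, t \in `[Num.min a b, Num.max a b] -> derivable G t 1.

Lemma taylor_lagrange2 : exists2 xi, Num.min a b <= xi <= Num.max a b &
  S b = S a + G a * (b - a) + 2^-1 * derive1n 2 S xi * (b - a) ^+ 2.
Proof.
have [<-|ab] := eqVneq a b.
  by exists a; rewrite ?ge_min ?le_max ?lexx // subrr expr0n /= !mulr0 !addr0.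
have ba_neq0 : b - a != 0 by rewrite subr_eq0 eq_sym.
(* K makes phi vanish at a as well as at b, so Rolle yields K = G'(c). *)
pose K := 2 * (S b - S a - G a * (b - a)) / (b - a) ^+ 2.
pose phi := cst (S b) - S - G * (cst b - id) - cst (K / 2) * (cst b - id) ^+ 2.
have phiE t : phi t = S b - S t - G t * (b - t) - K / 2 * (b - t) ^+ 2.
  by rewrite /phi /= exprfctE.
have phi_ab : phi a = phi b by rewrite !phiE /K subrr; field.
have dphi t : t \in `[Num.min a b, Num.max a b] ->
    is_derive t 1 phi ((b - t) * (K - 'D_1 G t)).
  move=> t_in; have := SD t_in; have /derivableP := GD t_in => dG dS.
  apply: is_derive_eq.
  have scaleE (x y : R) : x *: y = x * y by [].
  have idE : (cst b - id) t = b - t by [].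
  by rewrite !scaleE idE /= mulr0 addr0 expr1; field.
have [c c_in dphi0] : exists2 c, c \in `]Num.min a b, Num.max a b[ & is_derive c 1 phi 0.
  apply: Rolle.
  - by rewrite gt_min !lt_max !ltxx /= orbF -neq_lt.
  - by move=> t /subset_itv_oo_cc /dphi [].
  - by apply: derivable_within_continuous => t /dphi [].
  - by case: ltgtP ab.
have c_in' := subset_itv_oo_cc c_in.
have bc_neq0 : b - c != 0.
  rewrite subr_eq0; apply/eqP => bc; move: c_in.
  by rewrite -bc in_itv /= gt_min lt_max !ltxx !orbF => /andP[/lt_trans/[apply]]; rewrite ltxx.
have K_eq : K = 'D_1 G c.
  case: dphi0 => _ D0; case: (dphi c c_in') => _; rewrite D0 => /esym/eqP.
  by rewrite mulf_eq0 (negbTE bc_neq0) subr_eq0 => /eqP.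
have S2 : derive1n 2 S c = 'D_1 G c.
  rewrite derive1nS derive1n1 derive1E; apply: near_eq_derive.
  near=> t.
  have t_in : t \in `[Num.min a b, Num.max a b].
    by apply: subset_itv_oo_cc; near: t; exact: near_in_itvoo.
  by rewrite derive1E; case: (SD t_in).
exists c; first by move: c_in'; rewrite in_itv.
by rewrite S2 -K_eq /K; field.
Unshelve. all: by end_near.
Qed.

End TaylorLagrange.

Section PartialMap.
Variables (R : realType) (m : nat) (f : 'rV[R]_m -> R -> 'rV[R]_m).
Local Notation F := (fun q : 'rV[R]_m * R => f q.1 q.2).
Hypothesis fD : forall p, differentiable F p.
Hypothesis dF_cont : forall u, continuous (fun p => 'd F p u).

Lemma partial_differentiable t x : differentiable (fun w => f w t) x.
Proof.
have -> : (fun w => f w t) = F \o (fun w => (w, t)) by [].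
by apply: differentiable_comp; [apply: differentiable_pair | apply: fD].
Qed.

Lemma diff_partial t x d : 'd (fun w => f w t) x d = 'd F (x, t) (d, 0).
Proof.
have -> : (fun w => f w t) = F \o (fun w => (id w, cst t w)) by [].
have pairD : differentiable (fun w : 'rV[R]_m => (id w, cst t w)) x.
  exact: differentiable_pair.
rewrite diff_comp // diff_pair //=.
have -> : 'd id x d = d by rewrite diff_val.
have -> : 'd (cst t) x d = 0 :> R by rewrite diff_cst.
reflexivity.
Qed.

Lemma diff_partial_continuous t u : continuous (fun x => 'd (fun w => f w t) x u).
Proof.
have -> : (fun x => 'd (fun w => f w t) x u) = (fun p => 'd F p (u, 0)) \o (fun w => (w, t)).
  by apply/funext => x; rewrite diff_partial.
move=> x; apply: continuous_comp; last exact: dF_cont.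
by apply/differentiable_continuous/differentiable_pair.
Qed.

Lemma dotv_partial_taylor1 v x t : exists2 H2 : 'rV[R]_m -> R,
  forall z, dotv v (f x t) = dotv v (f z t)
    + dotv v ((x - z) *m 'J (fun w => f w t) z) + enorm (x - z) * H2 z &
  H2 z @[z --> x] --> 0.
Proof.
pose g w := dotv v (f w t).
have gD w : differentiable g w.
  exact: differentiable_comp (partial_differentiable t w) (dotv_differentiable v _).
have dgE w u : 'd g w u = dotv v ('d (fun w => f w t) w u).
  rewrite diff_comp /= ?diff_dotv //; first exact: partial_differentiable.
  exact: dotv_differentiable.
have dg_cont u : continuous (fun w => 'd g w u).
  have -> : (fun w => 'd g w u) = dotv v \o (fun w => 'd (fun w => f w t) w u).
    by apply/funext => w; rewrite dgE.
  move=> w; apply: continuous_comp; [exact: diff_partial_continuous | exact: dotv_continuous].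
exists (fun z => (g x - g z - 'd g z (x - z)) / enorm (x - z)); last first.
  exact: taylor1_remainder_cvg.
move=> z; rewrite /jacobian mul_rV_lin1 -dgE.
have [xz0|xz_neq0] := eqVneq (enorm (x - z)) 0.
  move/eqP: xz0; rewrite enorm_eq0 subr_eq0 => /eqP->.
  by rewrite !subrr linear0 !(subrr, mul0r, mulr0, addr0).
by rewrite mulrC divfK // /g; ring.
Qed.

End PartialMap.

Theorem corollary2 (R : realType) (m : nat)
  (f : 'rV[R]_m -> R -> 'rV[R]_m) (y Y : R -> 'rV[R]_m) (y0 : 'rV[R]_m)
  (T : R) (v : 'rV[R]_m) (Rth tt tc : R) :
  (* f is Lipschitz in y *)
  (exists L : R, forall (z w : 'rV[R]_m) (t : R),
      enorm (f z t - f w t) <= L * enorm (z - w)) ->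
  (* f is continuously differentiable (jointly in (y,t)) *)
  (forall p : 'rV[R]_m * R, differentiable (fun q : 'rV[R]_m * R => f q.1 q.2) p) ->
  (forall u : 'rV[R]_m * R,
      continuous (fun p : 'rV[R]_m * R => 'd (fun q : 'rV[R]_m * R => f q.1 q.2) p u)) ->
  (* y solves y' = f(y,t) on (0,T], y(0) = y0 *)
  y 0 = y0 ->
  (forall t, 0 < t <= T -> is_derive t 1 y (f (y t) t)) ->
  (* t_t = first time in (0,T] with S(y(t)) = R, S(x) = v . x *)
  0 < tt <= T -> dotv v (y tt) = Rth ->
  (forall t, 0 < t <= T -> dotv v (y t) = Rth -> tt <= t) ->
  (* t_c = first time in (0,T] with S(Y(t)) = R *)
  0 < tc <= T -> dotv v (Y tc) = Rth ->
  (forall t, 0 < t <= T -> dotv v (Y t) = Rth -> tc <= t) ->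
  exists (xi : R) (H2 : 'rV[R]_m -> R),
    [/\ Num.min tt tc <= xi <= Num.max tt tc,
        (* R_2(z) = ||y(t_c) - z|| H_2(z) is the first-order Taylor remainder
           of v . f(., t_c) expanded at z and evaluated at y(t_c) *)
        (forall z : 'rV[R]_m,
            dotv v (f (y tc) tc) =
              dotv v (f z tc) + dotv v ((y tc - z) *m 'J (fun w => f w tc) z)
              + enorm (y tc - z) * H2 z),
        H2 z @[z --> y tc] --> 0 &
        let eQ := tt - tc in
        let eps := y tc - Y tc in
        let R1 := 2^-1 * derive1n 2 (fun s : R => dotv v (y s)) xi * (tt - tc) ^+ 2 in
        let num := - dotv v eps - R1 in
        let den := dotv v (f (Y tc) tc)
                   + dotv v (eps *m 'J (fun w => f w tc) (Y tc))
                   + enorm eps * H2 (Y tc) in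
        eQ * den = num /\ (den != 0 -> eQ = num / den)].
Proof.
move=> _ fD dF_cont _ y_sol /andP[tt_gt0 tt_le] Stt _ /andP[tc_gt0 tc_le] SYtc _.
have [H2 H2E H2_cvg] := dotv_partial_taylor1 fD dF_cont v (y tc) tc.
pose S s := dotv v (y s).
pose G s := dotv v (f (y s) s).
have in_horizon t : t \in `[Num.min tc tt, Num.max tc tt] -> 0 < t <= T.
  rewrite in_itv /= => /andP[lo hi]; apply/andP; split.
  - by apply: lt_le_trans lo; rewrite lt_min tc_gt0.
  - by apply: le_trans hi _; rewrite ge_max tc_le.
have SD t : t \in `[Num.min tc tt, Num.max tc tt] -> is_derive t 1 S (G t).
  by move=> /in_horizon /y_sol; apply: is_derive_dotv.
have GD t : t \in `[Num.min tc tt, Num.max tc tt] -> derivable G t 1.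
  move=> /in_horizon /y_sol [/derivable1_diffP yD _]; apply/derivable1_diffP.
  apply: differentiable_comp (dotv_differentiable _ _).
  exact: differentiable_comp (differentiable_pair yD _) (fD _).
have [xi xi_between taylor] := taylor_lagrange2 SD GD.
exists xi, H2; split => //; first by rewrite minC maxC.
move=> eQ eps R1 num den.
have eQ_den : eQ * den = num.
  rewrite /den /eps -H2E /eQ /num /R1 dotvB SYtc -Stt.
  by rewrite /S /G in taylor; rewrite taylor; ring.
by split=> // den_neq0; rewrite -eQ_den mulfK.
Qed.
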